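(* Let $B',B''\subseteq\widetilde\Sigma^*\setminus\mathring\Sigma^+$ be bases in decomposed form, $B'$ with scaffold $sc'$ and fill $fl'$, $B''$ with scaffold $sc''$ and fill $fl''$. If $B'$ and $B''$ are concatenable, then $\mathcal{C}(B')\cdot\mathcal{C}(B'')=\mathcal{C}(B'\odot B'')$, where $B'\odot B''=(sc'\cdot sc'')\cup fl'\cup fl''$.
   Context: $\Sigma$ is a finite alphabet, $\mathring\Sigma=\{\mathring a\mid a\in\Sigma\}$ a disjoint (''dotted'') copy, and $\widetilde\Sigma=\Sigma\cup\mathring\Sigma$. The map $dot:\widetilde\Sigma^*\to\mathring\Sigma^*$ replaces each letter $a\in\Sigma$ by $\mathring a$ and leaves dotted letters unchanged. The match operation $@$ on letters is: $a@\mathring a=\mathring a@a=a$, $\mathring a@\mathring a=\mathring a$ for $a\in\Sigma$, undefined otherwise. For words $w,w'\in\widetilde\Sigma^n$, $w@w'=(w(1)@w'(1))\cdots(w(n)@w'(n))$ if every letterwise match is defined ($\epsilon@\epsilon=\epsilon$); otherwise (including unequal lengths) undefined. For languages, $B_1@B_2=\{w_1@w_2\mid w_1\in B_1,w_2\in B_2, w_1@w_2\text{ defined}\}$. Define $B^{0@}=B$, $B^{i@}=B^{(i-1)@}@B$, $B^@=\bigcup_{i\ge0}B^{i@}$, and $\mathcal{C}(B)=B^@\cap\Sigma^*$. $B$ is unproductive if $\mathcal{C}(B)=\emptyset$; $(B_1,B_2)$ is unmatchable if $B_1@B_2=\emptyset$. A base $B\subseteq\widetilde\Sigma^*\setminus\mathring\Sigma^+$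 is in decomposed form with scaffold $sc$ and fill $fl$ if $B$ is the disjoint union of $sc$ and $fl$, $fl$ is unproductive and $(sc,sc)$ is unmatchable. Decomposed bases $B',B''$ (scaffolds $sc',sc''$, fills $fl',fl''$) are concatenable if $B'\odot B''=(sc'\cdot sc'')\cup fl'\cup fl''$ is in decomposed form with scaffold $sc'\cdot sc''$ and fill $fl'\cup fl''$, and for all $w',w''\in\widetilde\Sigma^+$, $y'\in sc'$, $y''\in sc''$: (i) [there exists $x'\in fl'$ with $w'=x'\cdot dot(y'')$ and $x'@y'$ defined] if and only if [$w'\in fl'$ and $w'@(y'y'')$ is defined]; (ii) [there exists $x''\in fl''$ with $w''=dot(y')\cdot x''$ and $x''@y''$ defined] if and only if [$w''\in fl''$ and $w''@(y'y'')$ is defined]. *)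

From mathcomp Require Import all_boot.
Set Implicit Arguments. Unset Strict Implicit. Unset Printing Implicit Defensive.

Section Defs.
Variable Sigma : finType.

(* letters of the extended alphabet: Pl a = a in Sigma, Dt a = dotted a *)
Inductive ltr := Pl of Sigma | Dt of Sigma.

Definition word := seq ltr.
Definition lang := word -> Prop.

Definition is_plain (l : ltr) : bool := if l is Pl _ then true else false.
Definition is_dotted (l : ltr) : bool := if l is Dt _ then true else false.

Definition dotl (l : ltr) : ltr := match l with Pl a => Dt a | Dt a => Dt a end.
Definition dot (w : word) : word := map dotl w.

Definition lmatch (l1 l2 : ltr) : option ltr :=
  match l1, l2 with
  | Pl a, Dt b => if a == b then Some (Pl a) else None
  | Dt a, Pl b => if a == b then Some (Pl a) else None
  | Dt a, Dt b => if a == b then Some (Dt a) else None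
  | Pl _, Pl _ => None
  end.

Fixpoint wmatch (w1 w2 : word) : option word :=
  match w1, w2 with
  | [::], [::] => Some [::]
  | l1 :: w1', l2 :: w2' =>
      match lmatch l1 l2, wmatch w1' w2' with
      | Some l, Some w => Some (l :: w)
      | _, _ => None
      end
  | _, _ => None
  end.

Definition defined (o : option word) : Prop := exists w, o = Some w.

Definition langmatch (B1 B2 : lang) : lang :=
  fun w => exists w1 w2, B1 w1 /\ B2 w2 /\ wmatch w1 w2 = Some w.

Fixpoint mpow (B : lang) (i : nat) : lang :=
  match i with
  | 0 => B
  | i'.+1 => langmatch (mpow B i') B
  end.

Definition mstar (B : lang) : lang := fun w => exists i, mpow B i w.

Definition cl (B : lang) : lang := fun w => mstar B w /\ all is_plain w.

Definition lconcat (L1 L2 : lang) : lang :=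
  fun w => exists u v, L1 u /\ L2 v /\ w = u ++ v.

Definition unproductive (B : lang) : Prop := forall w, ~ cl B w.
Definition unmatchable (B1 B2 : lang) : Prop := forall w, ~ langmatch B1 B2 w.

Definition is_base (B : lang) : Prop :=
  forall w, B w -> ~ (w <> [::] /\ all is_dotted w).

Definition decomposed (B sc fl : lang) : Prop :=
  [/\ is_base B,
      (forall w, B w <-> sc w \/ fl w),
      (forall w, ~ (sc w /\ fl w)),
      unproductive fl &
      unmatchable sc sc].

Definition odot (sc' fl' sc'' fl'' : lang) : lang :=
  fun w => lconcat sc' sc'' w \/ fl' w \/ fl'' w.

Definition concatenable (sc' fl' sc'' fl'' : lang) : Prop :=
  [/\ decomposed (odot sc' fl' sc'' fl'') (lconcat sc' sc'')
        (fun w => fl' w \/ fl'' w),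
      (forall w' y' y'', w' <> [::] -> sc' y' -> sc'' y'' ->
         ((exists x', fl' x' /\ w' = x' ++ dot y'' /\ defined (wmatch x' y'))
          <-> (fl' w' /\ defined (wmatch w' (y' ++ y''))))) &
      (forall w'' y' y'', w'' <> [::] -> sc' y' -> sc'' y'' ->
         ((exists x'', fl'' x'' /\ w'' = dot y' ++ x'' /\ defined (wmatch x'' y''))
          <-> (fl'' w'' /\ defined (wmatch w'' (y' ++ y'')))))].

End Defs.

(* Matching lifts to a commutative and associative operation on [option word]
   ([None] = undefined), so an element of C(B) is a plain word
   y @ x_1 @ ... @ x_k with all factors in B, taken in any order.  For a
   decomposed base exactly one factor is a scaffold word: at least one because
   the fill is unproductive, at most one because all factors are pairwise
   matchable while the scaffold is unmatchable with itself.  For concatenable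
   bases, the fill words of B' ⊙ B'' matchable with a scaffold word y'y'' are
   exactly the words x' dot(y'') and dot(y') x'' with x', x'' fill words of B',
   B'' matchable with y', y''.  Matching with a dotted block changes nothing,
   so such a matching of y'y'' splits along the border into a matching of y'
   and one of y''. *)

From HB Require Import structures.
From mathcomp Require Import all_boot.
Set Implicit Arguments. Unset Strict Implicit. Unset Printing Implicit Defensive.

Lemma forall_or_exists_in (T : eqType) (P Q : T -> Prop) (L : seq T) :
  (forall z, z \in L -> P z \/ Q z) ->
  (forall z, z \in L -> Q z) \/ exists2 z, z \in L & P z.
Proof.
elim: L => [|x L IH] PQ; first by left.
have [|LQ|[z Lz Pz]] := IH; first by move=> z Lz; apply: PQ; rewrite inE Lz orbT.
- have [Px|Qx] := PQ x (mem_head _ _); first by right; exists x; rewrite ?mem_head.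
  by left=> z; rewrite inE => /predU1P [->|/LQ].
- by right; exists z; rewrite // inE Lz orbT.
Qed.

Section Match.
Variable Sigma : finType.
Implicit Types (l : ltr Sigma) (x y z u v w : word Sigma) (L R : seq (word Sigma)).

Definition sum_of_ltr l : Sigma + Sigma :=
  match l with Pl a => inl a | Dt a => inr a end.
Definition ltr_of_sum (s : Sigma + Sigma) : ltr Sigma :=
  match s with inl a => Pl a | inr a => Dt a end.
Lemma sum_of_ltrK : cancel sum_of_ltr ltr_of_sum. Proof. by case. Qed.
HB.instance Definition _ := Equality.copy (ltr Sigma) (can_type sum_of_ltrK).

Lemma lmatchC l1 l2 : lmatch l1 l2 = lmatch l2 l1.
Proof. by case: l1 => a; case: l2 => b //=; rewrite eq_sym; case: eqP => // ->. Qed.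

Lemma lmatchA l1 l2 l3 :
  obind (fun l => lmatch l l3) (lmatch l1 l2) = obind (lmatch l1) (lmatch l2 l3).
Proof.
case: l1 => a; case: l2 => b; case: l3 => c /=;
  repeat (case: eqP => /= [?|?]; subst) => //; rewrite ?eqxx //;
  repeat (case: eqP => /= [?|?]; subst).
Qed.

Definition omatch (a b : option (word Sigma)) : option (word Sigma) :=
  if a is Some x then obind (wmatch x) b else None.

Lemma wmatchC x y : wmatch x y = wmatch y x.
Proof. by elim: x y => [|l x IH] [|l' y] //=; rewrite lmatchC IH. Qed.

Lemma omatchC a b : omatch a b = omatch b a.
Proof. by case: a => [x|]; case: b => [y|] //=; rewrite wmatchC. Qed.

Lemma wmatchA x y z : omatch (wmatch x y) (Some z) = omatch (Some x) (wmatch y z).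
Proof.
elim: x y z => [|l1 x IH] [|l2 y] [|l3 z] //=.
all: try by repeat case: (lmatch _ _) => /= [?|]; repeat case: (wmatch _ _) => /= [?|].
move: (IH y z) (lmatchA l1 l2 l3).
case: (wmatch x y) => [xy|]; case: (wmatch y z) => [yz|];
case: (lmatch l1 l2) => [a|]; case: (lmatch l2 l3) => [b|] //=;
try case: (lmatch a l3) => [?|]; try case: (lmatch l1 b) => [?|];
try case: (wmatch xy z) => [?|]; try case: (wmatch x yz) => [?|] => //=; congruence.
Qed.

Lemma omatchA a b c : omatch (omatch a b) c = omatch a (omatch b c).
Proof.
case: a => [x|]; case: b => [y|]; case: c => [z|] //=; first exact: wmatchA.
by case: (wmatch x y).
Qed.

Lemma lmatch_dot l1 l2 l : lmatch l1 l2 = Some l -> dotl l = dotl l1 /\ dotl l = dotl l2.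
Proof. by case: l1 => a; case: l2 => b //=; case: eqP => // -> [<-]. Qed.

Lemma wmatch_dot x y w : wmatch x y = Some w -> dot w = dot x /\ dot w = dot y.
Proof.
elim: x y w => [|l x IH] [|l' y] w //=; first by case=> <-.
case El: (lmatch l l') => [m|] //; case Ew: (wmatch x y) => [v|] // [<-] /=.
by have [-> ->] := lmatch_dot El; have [-> ->] := IH _ _ Ew.
Qed.

Lemma size_dot x : size (dot x) = size x.
Proof. exact: size_map. Qed.

Lemma wmatch_size x y w : wmatch x y = Some w -> size x = size y.
Proof. by move/wmatch_dot=> [Ex Ey]; rewrite -size_dot -Ex Ey size_dot. Qed.

Lemma wmatch_dotr x y : dot x = dot y -> wmatch x (dot y) = Some x.
Proof. by move<-; elim: x => [|[a|a] x IH] //=; rewrite eqxx IH. Qed.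

Lemma wmatch_dotl x y : dot x = dot y -> wmatch (dot y) x = Some x.
Proof. by rewrite wmatchC; apply: wmatch_dotr. Qed.

Lemma wmatch_cat x1 x2 y1 y2 : size x1 = size y1 ->
  wmatch (x1 ++ x2) (y1 ++ y2) =
  obind (fun w1 => omap (cat w1) (wmatch x2 y2)) (wmatch x1 y1).
Proof.
elim: x1 y1 => [|l x1 IH] [|l' y1] //=; first by case: (wmatch x2 y2).
by move=> [/IH ->]; case: (lmatch l l'); case: (wmatch x1 y1); case: (wmatch x2 y2).
Qed.

Definition mfold (a : option (word Sigma)) : seq (word Sigma) -> option (word Sigma) :=
  foldr (fun z => omatch (Some z)) a.

Lemma mfold_cons a z L : mfold a (z :: L) = omatch (Some z) (mfold a L).
Proof. by []. Qed.

Lemma mfold_cat a L1 L2 : mfold a (L1 ++ L2) = mfold (mfold a L2) L1.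
Proof. exact: foldr_cat. Qed.

Lemma mfold_None L : mfold None L = None.
Proof. by elim: L => //= z L ->. Qed.

Lemma mfold_omatch a b L : mfold (omatch a b) L = omatch a (mfold b L).
Proof.
by elim: L => // z L IH; rewrite !mfold_cons IH -!omatchA (omatchC (Some z)).
Qed.

Lemma mfold_rem y z L : z \in L -> mfold (Some y) L = mfold (wmatch z y) (rem z L).
Proof.
elim: L => // x L IH; rewrite inE eq_sym mfold_cons.
have [-> _|nxz /IH ->] := eqVneq x z; first by rewrite [rem _ _]/= eqxx -mfold_omatch.
by rewrite /= (negPf nxz).
Qed.

Lemma mfold_defined y L u z :
  mfold (Some y) L = Some u -> z \in L -> defined (wmatch z y).
Proof.
move=> Eu /(mfold_rem y) Ez; move: Eu; rewrite Ez.
by case: (wmatch z y) => [v|]; [exists v | rewrite mfold_None].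
Qed.

Lemma mfold_rotate y z L : z \in L -> mfold (Some y) L = mfold (Some z) (y :: rem z L).
Proof. by move/(mfold_rem y)=> ->; rewrite wmatchC mfold_cons -mfold_omatch. Qed.

Lemma mfold_dot y L u : mfold (Some y) L = Some u -> dot u = dot y.
Proof.
elim: L u => [|z L IH] u /=; first by case=> ->.
by case E: (mfold _ L) => [v|] //= /wmatch_dot [_ ->]; apply: IH.
Qed.

Definition matched (P : lang Sigma) y : lang Sigma :=
  fun u => exists2 L, (forall z, z \in L -> P z) & mfold (Some y) L = Some u.

Lemma matched_sub (P Q : lang Sigma) y u :
  (forall z, P z -> Q z) -> matched P y u -> matched Q y u.
Proof. by move=> PQ [L LP Eu]; exists L => // z /LP /PQ. Qed.

Lemma mstar_matched (B : lang Sigma) w : mstar B w <-> exists2 y, B y & matched B y w.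
Proof.
split.
- case=> i; elim: i w => [|i IH] w /=; first by exists w => //; exists [::].
  move=> [w1 [w2 [/IH [y By [L LB E1]] [Bw2 Ew]]]].
  exists y => //; exists (w2 :: L); first by move=> z; rewrite inE => /predU1P [->|/LB].
  by rewrite mfold_cons E1 /= wmatchC.
- case=> y By [L]; elim: L w => [|z L IH] w LB; first by case=> <-; exists 0.
  rewrite mfold_cons; case E: (mfold _ L) => [v|] //= Ew.
  have [|i Hv] := IH v _ E; first by move=> x Lx; apply: LB; rewrite inE Lx orbT.
  exists i.+1, v, z; split=> //; split; last by rewrite wmatchC.
  by apply: LB; rewrite inE eqxx.
Qed.

Lemma mfold_catr a b R c : mfold (Some a) R = Some c ->
  mfold (Some (a ++ b)) [seq x ++ dot b | x <- R] = Some (c ++ b).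
Proof.
elim: R c => [|x R IH] c; first by case=> <-.
rewrite map_cons !mfold_cons; case E: (mfold _ R) => [c'|] //= Ex.
by rewrite (IH c' E) /= (wmatch_cat _ _ (wmatch_size Ex)) Ex wmatch_dotl.
Qed.

Lemma mfold_catl a b R c : mfold (Some b) R = Some c ->
  mfold (Some (a ++ b)) [seq dot a ++ x | x <- R] = Some (a ++ c).
Proof.
elim: R c => [|x R IH] c; first by case=> <-.
rewrite map_cons !mfold_cons; case E: (mfold _ R) => [c'|] //= Ex.
by rewrite (IH c' E) /= wmatch_cat ?size_dot // wmatch_dotl // Ex.
Qed.

Lemma mfold_cat_split (P1 P2 : lang Sigma) y1 y2 R w :
  (forall z, z \in R ->
     (exists2 x, P1 x & z = x ++ dot y2) \/ (exists2 x, P2 x & z = dot y1 ++ x)) ->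
  mfold (Some (y1 ++ y2)) R = Some w -> lconcat (matched P1 y1) (matched P2 y2) w.
Proof.
elim: R w => [|z R IH] w RP.
  by case=> <-; exists y1, y2; split; [|split]; [exists [::] | exists [::] |].
rewrite mfold_cons; case E: (mfold _ R) => [w'|] //= Ew.
have [|u [v [[L1 L1P Eu] [[L2 L2P Ev] Ew']]]] := IH w' _ E.
  by move=> x Rx; apply: RP; rewrite inE Rx orbT.
subst w'; have du := mfold_dot Eu; have dv := mfold_dot Ev.
case: (RP z (mem_head _ _)) => -[x Px Ez]; subst z.
- have sxu : size x = size u.
    have sv : size v = size y2 by rewrite -size_dot dv size_dot.
    by move: (wmatch_size Ew); rewrite !size_cat size_dot sv => /addIn.
  move: Ew; rewrite wmatch_cat // -dv wmatch_dotl //.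
  case Exu: (wmatch x u) => [u'|] //= [<-].
  exists u', v; split; last split=> //; last by exists L2.
  exists (x :: L1); last by rewrite mfold_cons Eu.
  by move=> z; rewrite inE => /predU1P [->|/L1P].
- have syu : size (dot y1) = size u by rewrite -du size_dot.
  move: Ew; rewrite (wmatch_cat _ _ syu) -du wmatch_dotl //.
  case Exv: (wmatch x v) => [v'|] //= [<-].
  exists u, v'; split; first by exists L1.
  split=> //; exists (x :: L2); last by rewrite mfold_cons Ev.
  by move=> z; rewrite inE => /predU1P [->|/L2P].
Qed.

Lemma unproductive_nil (B : lang Sigma) : unproductive B -> ~ B [::].
Proof. by move=> unp B0; apply: (unp [::]); split=> //; exists 0. Qed.

Lemma cl_decomposed (B sc fl : lang Sigma) u : decomposed B sc fl ->
  cl B u <-> all (@is_plain _) u /\ exists2 y, sc y & matched fl y u.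
Proof.
case=> _ BE _ unp unm; split; last first.
  case=> plain_u [y scy mu]; split=> //; apply/mstar_matched.
  by exists y; [apply/BE; left | apply: matched_sub mu => z flz; apply/BE; right].
case=> /mstar_matched [y0 By0 [L0 L0B Eu]] plain_u; split=> //.
have y0L0B z : z \in y0 :: L0 -> B z by rewrite inE => /predU1P [->|/L0B].
have [all_fl|[y Ly scy]] := forall_or_exists_in (fun z Lz => (BE z).1 (y0L0B z Lz)).
  case: (unp u); split=> //; apply/mstar_matched; exists y0; first exact/all_fl/mem_head.
  by exists L0 => // z Lz; apply: all_fl; rewrite inE Lz orbT.
have [R RB Eu'] : exists2 R, (forall z, z \in R -> B z) & mfold (Some y) R = Some u.
  move: Ly; rewrite inE => /predU1P [->|Ly]; first by exists L0.
  exists (y0 :: rem y L0); last by rewrite -mfold_rotate.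
  by move=> z; rewrite inE => /predU1P [->|/mem_rem/L0B].
exists y => //; exists R => // z Rz.
have [scz|//] := (BE z).1 (RB z Rz).
by have [v Ev] := mfold_defined Eu' Rz; case: (unm v); exists z, y.
Qed.

Section Concatenation.
Variables sc' fl' sc'' fl'' : lang Sigma.
Hypothesis unproductive_fl' : unproductive fl'.
Hypothesis unproductive_fl'' : unproductive fl''.
Hypothesis concat : concatenable sc' fl' sc'' fl''.

Let fill (z : word Sigma) := fl' z \/ fl'' z.

Let fl'_nonnil z : fl' z -> z <> [::].
Proof. by move=> flz Ez; apply: (unproductive_nil unproductive_fl'); rewrite -Ez. Qed.

Let fl''_nonnil z : fl'' z -> z <> [::].
Proof. by move=> flz Ez; apply: (unproductive_nil unproductive_fl''); rewrite -Ez. Qed.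

Lemma matched_cat y1 y2 u v : sc' y1 -> sc'' y2 ->
  matched fl' y1 u -> matched fl'' y2 v -> matched fill (y1 ++ y2) (u ++ v).
Proof.
case: concat => _ C1 C2 sc1 sc2 [R1 R1fl Eu] [R2 R2fl Ev].
exists ([seq x ++ dot y2 | x <- R1] ++ [seq dot y1 ++ x | x <- R2]); last first.
  by rewrite mfold_cat (mfold_catl _ Ev) -(mfold_dot Ev) (mfold_catr _ Eu).
move=> z; rewrite mem_cat => /orP [] /mapP [x Rx ->]; [left | right].
- have flx := R1fl x Rx; have nz : x ++ dot y2 <> [::].
    by case: x flx {Rx} => // /fl'_nonnil.
  by apply: ((C1 _ y1 y2 nz sc1 sc2).1 _).1; exists x; split=> //; split=> //;
    apply: mfold_defined Eu Rx.
- have flx := R2fl x Rx; have nz : dot y1 ++ x <> [::].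
    by case: (dot y1); case: x flx {Rx} => // /fl''_nonnil.
  by apply: ((C2 _ y1 y2 nz sc1 sc2).1 _).1; exists x; split=> //; split=> //;
    apply: mfold_defined Ev Rx.
Qed.

Lemma matched_split y1 y2 w : sc' y1 -> sc'' y2 ->
  matched fill (y1 ++ y2) w -> lconcat (matched fl' y1) (matched fl'' y2) w.
Proof.
case: concat => _ C1 C2 sc1 sc2 [R Rfill Ew]; apply: (mfold_cat_split _ Ew) => z Rz.
have dz := mfold_defined Ew Rz.
case: (Rfill z Rz) => flz; [left | right].
- have [x [flx [-> _]]] := (C1 z y1 y2 (fl'_nonnil flz) sc1 sc2).2 (conj flz dz).
  by exists x.
- have [x [flx [-> _]]] := (C2 z y1 y2 (fl''_nonnil flz) sc1 sc2).2 (conj flz dz).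
  by exists x.
Qed.

End Concatenation.
End Match.

Theorem theorem2 (Sigma : finType) (B' sc' fl' B'' sc'' fl'' : lang Sigma) :
  decomposed B' sc' fl' ->
  decomposed B'' sc'' fl'' ->
  concatenable sc' fl' sc'' fl'' ->
  forall w : word Sigma,
    lconcat (cl B') (cl B'') w <->
    cl (odot sc' fl' sc'' fl'') w.
Proof.
move=> D1 D2 conc w; have [D _ _] := conc.
have [_ _ _ unp1 _] := D1; have [_ _ _ unp2 _] := D2.
split.
- case=> u [v [/(cl_decomposed _ D1) [pu [y1 sc1 mu]]]].
  case=> /(cl_decomposed _ D2) [pv [y2 sc2 mv]] ->.
  apply/(cl_decomposed _ D); split; first by rewrite all_cat pu pv.
  exists (y1 ++ y2); first by exists y1, y2.
  exact (matched_cat unp1 unp2 conc sc1 sc2 mu mv).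
- case/(cl_decomposed _ D)=> pw [_ [y1 [y2 [sc1 [sc2 ->]]]] mw].
  have [u [v [mu [mv Ew]]]] := matched_split unp1 unp2 conc sc1 sc2 mw.
  move: pw; rewrite Ew all_cat => /andP [pu pv].
  exists u, v; split; [|split=> //].
  + by apply/(cl_decomposed _ D1); split=> //; exists y1.
  + by apply/(cl_decomposed _ D2); split=> //; exists y2.
Qed.
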